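(* Let $0<p_{\min}\le p_{\max}$ be vectors in $\mathbb{R}^n$ and $\mathcal{D}_p=\{p:p_{\min}\le p\le p_{\max}\}$. Let $\mathcal{I}:\mathbb{R}^n_{\ge0}\to\mathbb{R}^n$ be differentiable and standard, with $\mathcal{I}(\mathcal{D}_p)\subseteq\mathcal{D}_p$, and let $\kappa:\mathbb{R}^n\to\mathbb{R}^m$ be differentiable with $\nabla\kappa(p)\ge0$ having non-zero rows for all $p\in\mathcal{D}_p$. Consider the problem \[ \min_{p\in\mathcal{D}_p}\ \kappa(p)\quad\text{s.t.}\quad p\ge\mathcal{I}(p), \] and assume it is feasible. Then, with $x=\ln p$, $f_0(x)=\kappa(e^x)$ and $f(x)=\ln\mathcal{I}(e^x)$, the equivalent problem $\min_x f_0(x)$ s.t. $x\ge f(x)$ is Fast-Lipschitz, and consequently the unique fixed point $p^\star=\mathcal{I}(p^\star)$ in $\mathcal{D}_p$ is the unique Pareto optimal solution of the original problem (and the iteration $p^{k+1}=\mathcal{I}(p^k)$ converges to it).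
   Context: Inequalities are element-wise; $\ln$ and $\exp$ act componentwise. $\mathcal{I}$ is standard if for all $p,q\ge0$: (positivity) $\mathcal{I}(p)>0$; (monotonicity) $p\ge q\Rightarrow\mathcal{I}(p)\ge\mathcal{I}(q)$; (scalability) for all $c>1$, $\mathcal{I}(cp)<c\,\mathcal{I}(p)$. Gradient convention: $[\nabla\kappa(p)]_{ij}=\partial\kappa_j(p)/\partial p_i$. For a vector objective, a feasible $p$ is Pareto optimal (minimization) if no feasible $q$ has $\kappa(q)\le\kappa(p)$, $\kappa(q)\neq\kappa(p)$. A problem $\min g_0(x)$ s.t. $x\ge g(x)$ is Fast-Lipschitz if it admits a unique Pareto optimal solution, namely the unique solution of $x=g(x)$. *)

From Stdlib Require Import Reals.
From mathcomp Require Import all_boot.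
Set Implicit Arguments.
Unset Strict Implicit.
Unset Printing Implicit Defensive.
Open Scope R_scope.

Definition vec (n : nat) := 'I_n -> R.

Definition vconst {n} (c : R) : vec n := fun _ => c.
Definition vadd {n} (p q : vec n) : vec n := fun i => p i + q i.
Definition vscale {n} (c : R) (p : vec n) : vec n := fun i => c * p i.
Definition vexp {n} (x : vec n) : vec n := fun i => exp (x i).
Definition vln {n} (p : vec n) : vec n := fun i => ln (p i).

Definition vle {n} (p q : vec n) : Prop := forall i, p i <= q i.
Definition vlt {n} (p q : vec n) : Prop := forall i, p i < q i.

Definition inbox {n} (pmin pmax p : vec n) : Prop := vle pmin p /\ vle p pmax.

(* Linear map given by a matrix J with the convention
   [grad F(p)]_{ij} = d F_j / d p_i, i.e. (J h)_j = sum_i J i j * h i. *)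
Definition lin_app {n m} (J : 'I_n -> 'I_m -> R) (h : vec n) : vec m :=
  fun j => \big[Rplus/0]_(i < n) (J i j * h i).

(* (Frechet) differentiability of F at p relative to a domain S (increments h
   with p + h in S), with gradient J, w.r.t. the sup norm. *)
Definition has_gradient_within {n m} (S : vec n -> Prop) (F : vec n -> vec m)
    (p : vec n) (J : 'I_n -> 'I_m -> R) : Prop :=
  forall eps, 0 < eps -> exists delta, 0 < delta /\
    forall h : vec n, S (vadd p h) -> (forall i, Rabs (h i) < delta) ->
      forall r, (forall i, Rabs (h i) <= r) ->
        forall j, Rabs (F (vadd p h) j - F p j - lin_app J h j) <= eps * r.

Definition has_gradient {n m} (F : vec n -> vec m) (p : vec n) J :=
  has_gradient_within (fun _ => True) F p J.

Definition differentiable_on {n m} (S : vec n -> Prop) (F : vec n -> vec m) :=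
  forall p, S p -> exists J, has_gradient_within S F p J.

Definition nonneg_orthant {n} (p : vec n) : Prop := vle (vconst 0) p.

Definition standard {n} (I : vec n -> vec n) : Prop :=
  (forall p, nonneg_orthant p -> vlt (vconst 0) (I p)) /\
  (forall p q, nonneg_orthant p -> nonneg_orthant q -> vle q p -> vle (I q) (I p)) /\
  (forall p c, nonneg_orthant p -> 1 < c -> vlt (I (vscale c p)) (vscale c (I p))).

Definition pareto_optimal {n m} (feas : vec n -> Prop) (obj : vec n -> vec m)
    (p : vec n) : Prop :=
  feas p /\ ~ (exists q, feas q /\ vle (obj q) (obj p) /\ obj q <> obj p).

(* The problem  min g0(x)  s.t. x in X, x >= g(x)  is Fast-Lipschitz:
   it admits a unique Pareto optimal solution, namely the unique solution
   (in X) of x = g(x). *)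
Definition fast_lipschitz {n m} (X : vec n -> Prop) (g0 : vec n -> vec m)
    (g : vec n -> vec n) : Prop :=
  let feas := fun x => X x /\ vle (g x) x in
  exists xs, (X xs /\ xs = g xs /\ (forall y, X y -> y = g y -> y = xs)) /\
    pareto_optimal feas g0 xs /\
    (forall y, pareto_optimal feas g0 y -> y = xs).

(* A standard function [I] has at most one fixed point, and it is the least
   feasible point [p >= I p].  Iterating [I] from [pmax] and from [pmin] gives monotone orbits in the box whose limits are fixed points, so they
   coincide and squeeze every other orbit.  By the mean value theorem along
   segments, a nonnegative gradient with nonzero rows makes [kappa] monotone and
   injective on comparable points, so the least feasible point is the unique
   Pareto optimum.  Finally [p = exp x] is an order isomorphism onto the positive
   orthant, which carries everything over to the logarithmic problem. *)

From Stdlib Require Import Reals.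
From mathcomp Require Import all_boot.
From Stdlib Require Import Lra Lia Psatz ClassicalEpsilon FunctionalExtensionality Classical.
Set Implicit Arguments.
Unset Strict Implicit.
Open Scope R_scope.

Lemma exists_argmax (T : finType) (f : T -> R) (x0 : T) :
  exists k, forall j, f j <= f k.
Proof.
suff [k Hk] : exists k, forall j, j \in enum T -> f j <= f k.
  by exists k => j; apply: Hk; rewrite mem_enum.
elim: (enum T) => [|x s [k Hk]]; first by exists x0 => j; rewrite in_nil.
have [Hxk | Hkx] := Rle_dec (f x) (f k).
  by exists k => j; rewrite in_cons => /orP [/eqP -> | /Hk].
by exists x => j; rewrite in_cons => /orP [/eqP -> | /Hk]; lra.
Qed.

Lemma eventually_forall_fin (T : finType) (P : T -> nat -> Prop) :
  (forall i, exists N, forall k, (N <= k)%coq_nat -> P i k) ->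
  exists N, forall i k, (N <= k)%coq_nat -> P i k.
Proof.
move=> HP.
suff [N HN] : exists N, forall i k, i \in enum T -> (N <= k)%coq_nat -> P i k.
  by exists N => i k; apply: HN; rewrite mem_enum.
elim: (enum T) => [|x s [N HN]]; first by exists 0%N => i k; rewrite in_nil.
have [Nx HNx] := HP x.
exists (Nat.max N Nx) => i k; rewrite in_cons => /orP [/eqP -> | Hi] Hk.
  by apply: HNx; lia.
by apply: HN => //; lia.
Qed.

Lemma big_Rplus_ge0 (T : Type) (s : seq T) (F : T -> R) :
  (forall i, 0 <= F i) -> 0 <= \big[Rplus/0]_(i <- s) F i.
Proof. by move=> HF; apply: big_ind => [|x y|i _] //; [lra | exact: Rplus_le_le_0_compat]. Qed.

Lemma big_Rplus_ge_term (T : eqType) (s : seq T) (F : T -> R) k :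
  (forall i, 0 <= F i) -> k \in s -> F k <= \big[Rplus/0]_(i <- s) F i.
Proof.
move=> HF; elim: s => [|x s IH] //; rewrite in_cons big_cons => /orP [/eqP -> | Hk].
  by have := @big_Rplus_ge0 _ s _ HF; lra.
by have := IH Hk; have := HF x; lra.
Qed.

Lemma derivable_pt_lim_big_Rplus (T : Type) (s : seq T) (f : T -> R -> R) (f' : T -> R) t :
  (forall j, derivable_pt_lim (f j) t (f' j)) ->
  derivable_pt_lim (fun u => \big[Rplus/0]_(j <- s) f j u) t (\big[Rplus/0]_(j <- s) f' j).
Proof.
move=> Hf; elim: s => [|x s IH].
  have -> : (fun u => \big[Rplus/0]_(j <- [::]) f j u) = fct_cte 0.
    by apply: functional_extensionality => u; rewrite big_nil.
  by rewrite big_nil; exact: derivable_pt_lim_const.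
have -> : (fun u => \big[Rplus/0]_(j <- x :: s) f j u) =
          (f x + fun u => \big[Rplus/0]_(j <- s) f j u)%F.
  by apply: functional_extensionality => u; rewrite big_cons.
by rewrite big_cons; exact: derivable_pt_lim_plus.
Qed.

Lemma lin_app_scale {n m} (J : 'I_n -> 'I_m -> R) (d : vec n) c j :
  lin_app J (fun i => c * d i) j = c * lin_app J d j.
Proof.
rewrite /lin_app (big_endo (Rmult c)) => [|x y|]; try ring.
by apply: eq_bigr => i _; ring.
Qed.

Lemma lin_app_ge0 {n m} (J : 'I_n -> 'I_m -> R) (d : vec n) j :
  (forall i, 0 <= J i j) -> (forall i, 0 <= d i) -> 0 <= lin_app J d j.
Proof. by move=> HJ Hd; apply: big_Rplus_ge0 => i; apply: Rmult_le_pos. Qed.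

Lemma lin_app_gt0 {n m} (J : 'I_n -> 'I_m -> R) (d : vec n) j i0 :
  (forall i, 0 <= J i j) -> (forall i, 0 <= d i) -> J i0 j <> 0 -> 0 < d i0 ->
  0 < lin_app J d j.
Proof.
move=> HJ Hd HJ0 Hd0.
have Hterm : 0 < J i0 j * d i0 by apply: Rmult_lt_0_compat => //; have := HJ i0; lra.
suff : J i0 j * d i0 <= lin_app J d j by lra.
apply: (@big_Rplus_ge_term _ _ (fun i => J i j * d i)); last exact: mem_index_enum.
by move=> i; apply: Rmult_le_pos.
Qed.

Definition segment {n} (p q : vec n) (s : R) : vec n := fun i => p i + s * (q i - p i).

Lemma segment0 {n} (p q : vec n) : segment p q 0 = p.
Proof. by apply: functional_extensionality => i; rewrite /segment; ring. Qed.

Lemma segment1 {n} (p q : vec n) : segment p q 1 = q.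
Proof. by apply: functional_extensionality => i; rewrite /segment; ring. Qed.

Lemma has_gradient_derivable_segment {n m} (F : vec n -> vec m) (p q : vec n) t J j :
  has_gradient F (segment p q t) J ->
  derivable_pt_lim (fun s => F (segment p q s) j) t (lin_app J (fun i => q i - p i) j).
Proof.
move=> HG eps Heps.
set d := fun i => q i - p i.
set M := \big[Rplus/0]_(i <- index_enum 'I_n) Rabs (d i).
have HM : 0 <= M by apply: big_Rplus_ge0 => i; exact: Rabs_pos.
have HdM i : Rabs (d i) <= M.
  apply: (@big_Rplus_ge_term _ _ (fun i => Rabs (d i))); last exact: mem_index_enum.
  by move=> k; exact: Rabs_pos.
set eps' := eps / (2 * (M + 1)).
have Heps'E : eps' * (2 * (M + 1)) = eps by rewrite /eps'; field; lra.
have Heps' : 0 < eps' by rewrite /eps'; apply: Rdiv_lt_0_compat; lra.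
have [del [Hdel HD]] := HG _ Heps'.
have Hdel' : 0 < del / (M + 1) by apply: Rdiv_lt_0_compat; lra.
exists (mkposreal _ Hdel') => h Hh0 /= Hh.
have Hhpos : 0 < Rabs h by apply: Rabs_pos_lt.
have HhM : Rabs h * (M + 1) < del.
  by move: Hh; rewrite /Rdiv => /(Rmult_lt_compat_r (M + 1)); rewrite Rmult_assoc Rinv_l; lra.
have Hsmall i : Rabs (h * d i) < del.
  by rewrite Rabs_mult; have := HdM i; have := Rabs_pos (d i); nra.
have HhdM i : Rabs (h * d i) <= Rabs h * M.
  by rewrite Rabs_mult; apply: Rmult_le_compat_l; [exact: Rabs_pos | exact: HdM].
have Hbound := HD (fun i => h * d i) Logic.I Hsmall _ HhdM j.
have Eseg : vadd (segment p q t) (fun i => h * d i) = segment p q (t + h).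
  by apply: functional_extensionality => i; rewrite /vadd /segment /d; ring.
rewrite Eseg lin_app_scale in Hbound.
set A := F (segment p q (t + h)) j - F (segment p q t) j in Hbound *.
have Hdiv : Rabs (A / h - lin_app J d j) * Rabs h = Rabs (A - h * lin_app J d j).
  by rewrite -Rabs_mult; congr Rabs; field.
nra.
Qed.

Lemma inbox_segment {n} (pmin pmax p q : vec n) s :
  inbox pmin pmax p -> inbox pmin pmax q -> 0 <= s <= 1 -> inbox pmin pmax (segment p q s).
Proof.
move=> [Hp1 Hp2] [Hq1 Hq2] Hs; split=> i;
  by have := Hp1 i; have := Hp2 i; have := Hq1 i; have := Hq2 i; rewrite /segment; nra.
Qed.

Lemma vle_neq_exists_lt {n} (p q : vec n) : vle p q -> p <> q -> exists i, p i < q i.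
Proof.
move=> Hpq Hne; apply: NNPP => Hno; apply: Hne.
apply: functional_extensionality => i; apply: Rle_antisym; first exact: Hpq.
by apply: Rnot_lt_le => Hlt; apply: Hno; exists i.
Qed.

Section NonnegativeGradient.

Variables (n m : nat) (S : vec n -> Prop) (F : vec n -> vec m).
Hypothesis S_convex : forall p q s, S p -> S q -> 0 <= s <= 1 -> S (segment p q s).
Hypothesis F_diff : forall p, exists J, has_gradient F p J.
Hypothesis F_grad : forall p, S p -> forall J, has_gradient F p J ->
  (forall i j, 0 <= J i j) /\ (forall i, exists j, J i j <> 0).

Lemma nonneg_gradient_vle p q : S p -> S q -> vle p q -> vle (F p) (F q).
Proof.
move=> Sp Sq Hpq j.
have [J HJ] := choice _ F_diff.
have [c [Hmvt Hc]] := MVT_cor2 (fun s => F (segment p q s) j)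
  (fun s => lin_app (J (segment p q s)) (fun i => q i - p i) j) 0 1 Rlt_0_1
  (fun c _ => has_gradient_derivable_segment j (HJ _)).
move: Hmvt; rewrite segment0 segment1.
suff : 0 <= lin_app (J (segment p q c)) (fun i => q i - p i) j by nra.
have [HJ0 _] := F_grad (S_convex Sp Sq (conj (Rlt_le _ _ Hc.1) (Rlt_le _ _ Hc.2))) (HJ _).
by apply: lin_app_ge0 => // i; have := Hpq i; lra.
Qed.

Lemma nonneg_gradient_neq p q : S p -> S q -> vle p q -> p <> q -> F p <> F q.
Proof.
move=> Sp Sq Hpq Hne HF.
have [i0 Hi0] := vle_neq_exists_lt Hpq Hne.
have [J HJ] := choice _ F_diff.
pose sumF s := \big[Rplus/0]_(j <- index_enum 'I_m) F (segment p q s) j.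
pose sumD s := \big[Rplus/0]_(j <- index_enum 'I_m)
                 lin_app (J (segment p q s)) (fun i => q i - p i) j.
have [c [Hmvt Hc]] := MVT_cor2 sumF sumD 0 1 Rlt_0_1 (fun c _ =>
  derivable_pt_lim_big_Rplus _ (fun j => has_gradient_derivable_segment j (HJ _))).
move: Hmvt; rewrite /sumF segment0 segment1 HF Rminus_diag.
have [HJ0 Hrow] := F_grad (S_convex Sp Sq (conj (Rlt_le _ _ Hc.1) (Rlt_le _ _ Hc.2))) (HJ _).
have Hd i : 0 <= q i - p i by have := Hpq i; lra.
have [j0 Hj0] := Hrow i0.
have Hpos : 0 < lin_app (J (segment p q c)) (fun i => q i - p i) j0.
  by apply: (lin_app_gt0 (i0 := i0)) => //; lra.
suff : lin_app (J (segment p q c)) (fun i => q i - p i) j0 <= sumD c by lra.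
apply: (@big_Rplus_ge_term _ _ (fun j => lin_app _ _ j)); last exact: mem_index_enum.
by move=> j; apply: lin_app_ge0.
Qed.

End NonnegativeGradient.

Lemma least_pareto_optimal {n m} (feas : vec n -> Prop) (obj : vec n -> vec m) l :
  feas l -> (forall q, feas q -> vle l q) ->
  (forall p q, feas p -> feas q -> vle p q -> vle (obj p) (obj q)) ->
  (forall p q, feas p -> feas q -> vle p q -> p <> q -> obj p <> obj q) ->
  pareto_optimal feas obj l /\ forall q, pareto_optimal feas obj q -> q = l.
Proof.
move=> Fl Hleast Hle Hneq; split.
  split=> // -[q [Fq [Hql Hne]]]; apply: Hne.
  apply: functional_extensionality => j.
  by apply: Rle_antisym; [exact: Hql | exact: Hle _ _ Fl Fq (Hleast q Fq) j].
move=> q [Fq Hopt]; apply: NNPP => Hne; apply: Hopt.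
exists l; split=> //; split; first exact: Hle _ _ Fl Fq (Hleast q Fq).
by apply: Hneq Fl Fq (Hleast q Fq) _ => Elq; apply: Hne.
Qed.

Lemma pareto_optimal_comp {n m} (phi : vec n -> vec n) (feas feas' : vec n -> Prop)
    (obj : vec n -> vec m) x :
  (forall y, feas' y <-> feas (phi y)) -> (forall q, feas q -> exists y, q = phi y) ->
  pareto_optimal feas' (fun y => obj (phi y)) x <-> pareto_optimal feas obj (phi x).
Proof.
move=> Hfeas Hsurj; split=> -[Fx Hopt]; (split; first by apply/Hfeas).
  move=> [q [Fq Hdom]]; have [y Ey] := Hsurj q Fq; apply: Hopt.
  by exists y; rewrite Hfeas -Ey.
by move=> [y [Fy Hdom]]; apply: Hopt; exists (phi y); rewrite -Hfeas.
Qed.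

Lemma vlt0_nonneg {n} (p : vec n) : vlt (vconst 0) p -> nonneg_orthant p.
Proof. by move=> Hp i; have := Hp i; rewrite /vconst; lra. Qed.

Lemma vscale_nonneg {n} c (p : vec n) : 0 <= c -> nonneg_orthant p -> nonneg_orthant (vscale c p).
Proof. by move=> Hc Hp i; have := Hp i; rewrite /vscale /vconst; nra. Qed.

Lemma exists_gt1_mul_lt x y : 0 < y -> y < x -> exists c, 1 < c /\ c * y < x.
Proof.
move=> Hy Hyx; exists ((x / y + 1) / 2); split.
  have : x / y * y = x by field; lra.
  nra.
have -> : (x / y + 1) / 2 * y = (x + y) / 2 by field; lra.
lra.
Qed.

Lemma cv_eventually_between (u : nat -> R) l a b :
  Un_cv u l -> a < l < b -> exists N, forall k, (N <= k)%coq_nat -> a < u k < b.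
Proof.
move=> Hu Hl.
have [N HN] := Hu (Rmin (l - a) (b - l)) ltac:(apply: Rmin_glb_lt; lra).
exists N => k /HN; rewrite /Rdist => /Rabs_def2.
by have := Rmin_l (l - a) (b - l); have := Rmin_r (l - a) (b - l); lra.
Qed.

Section StandardFunction.

Variables (n : nat) (I : vec n -> vec n).
Hypothesis I_std : standard I.

(* If [c = max_j a_j / b_j] exceeded 1, then [a <= c b] would give
   [a = I a <= I (c b) < c I b <= c b], which is strict at the maximising index. *)
Lemma standard_fixpoint_le a b :
  nonneg_orthant a -> vlt (vconst 0) b -> a = I a -> vle (I b) b -> vle a b.
Proof.
case: I_std => _ [Imono Iscal] Ha Hb Hfix Hfeas i0; apply: Rnot_lt_le => Hlt.
have [k Hk] := exists_argmax (fun j => a j / b j) i0.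
have Hbpos j : 0 < b j by exact: Hb.
set c := a k / b k.
have Hc : c * b k = a k by rewrite /c; field; have := Hbpos k; lra.
have Hc1 : 1 < c.
  have : a i0 / b i0 * b i0 = a i0 by field; have := Hbpos i0; lra.
  have := Hk i0; have := Hbpos i0; rewrite -/c; nra.
have Hacb : vle a (vscale c b).
  move=> j; rewrite /vscale.
  have -> : a j = a j / b j * b j by field; have := Hbpos j; lra.
  by apply: Rmult_le_compat_r; [have := Hbpos j; lra | exact: Hk].
have Hcb := vscale_nonneg (Rlt_le _ _ (Rlt_trans _ _ _ Rlt_0_1 Hc1)) (vlt0_nonneg Hb).
have := Imono _ _ Hcb Ha Hacb k; have := Iscal _ _ (vlt0_nonneg Hb) Hc1 k.
have := Hfeas k; rewrite /vscale -Hfix; have := Hbpos k; nra.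
Qed.

Lemma standard_fixpoint_unique a b :
  vlt (vconst 0) a -> vlt (vconst 0) b -> a = I a -> b = I b -> a = b.
Proof.
move=> Ha Hb Hfa Hfb; apply: functional_extensionality => i; apply: Rle_antisym.
  by apply: standard_fixpoint_le (vlt0_nonneg Ha) Hb Hfa _ i; rewrite -Hfb => j; lra.
by apply: standard_fixpoint_le (vlt0_nonneg Hb) Ha Hfb _ i; rewrite -Hfa => j; lra.
Qed.

Section OrbitLimit.

Variables (u : nat -> vec n) (L : vec n).
Hypotheses (u_nonneg : forall k, nonneg_orthant (u k))
  (u_orbit : forall k, u k.+1 = I (u k))
  (u_cv : forall i, Un_cv (fun k => u k i) (L i))
  (L_pos : vlt (vconst 0) L).

Lemma orbit_eventually_near c : 1 < c ->
  exists N, forall j k, (N <= k)%coq_nat -> / c * L j < u k j < c * L j.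
Proof.
move=> Hc; apply: eventually_forall_fin => j; apply: cv_eventually_between => //.
have := L_pos j; rewrite /vconst => Lj.
have Hc0 : 0 < / c by apply: Rinv_0_lt_compat; lra.
have : / c < 1 by rewrite -Rinv_1; apply: Rinv_1_lt_contravar; lra.
nra.
Qed.

(* Scalability plays the role of continuity: [u k <= c L] eventually, so
   [u (k+1) = I (u k) <= I (c L) < c I L], and symmetrically from below. *)
Lemma orbit_limit_le_image : vle L (I L).
Proof.
case: I_std => Ipos [Imono Iscal] i; apply: Rnot_lt_le => Hlt.
have ILi : 0 < I L i by have := Ipos _ (vlt0_nonneg L_pos) i.
have [c [Hc HcIL]] := exists_gt1_mul_lt ILi Hlt.
have [N HN] := orbit_eventually_near Hc.
have [N' HN'] := cv_eventually_between (u_cv i) (conj HcIL (Rlt_plus_1 (L i))).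
pose k := Nat.max N N'.
have Hle : vle (u k) (vscale c L) by move=> j; have := HN j k ltac:(lia); rewrite /vscale; lra.
have := Imono _ _ (vscale_nonneg (Rlt_le _ _ (Rlt_trans _ _ _ Rlt_0_1 Hc))
                   (vlt0_nonneg L_pos)) (u_nonneg k) Hle i.
have := Iscal _ _ (vlt0_nonneg L_pos) Hc i; have := HN' k.+1 ltac:(lia).
by rewrite u_orbit /vscale; lra.
Qed.

Lemma orbit_image_le_limit : vle (I L) L.
Proof.
case: I_std => Ipos [Imono Iscal] i; apply: Rnot_lt_le => Hlt.
have Li : 0 < L i by have := L_pos i.
have [c [Hc HcL]] := exists_gt1_mul_lt Li Hlt.
have Hc0 : 0 < / c by apply: Rinv_0_lt_compat; lra.
have [N HN] := orbit_eventually_near Hc.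
have Hcc : c * / c = 1 by field; lra.
have HLi : L i < / c * I L i by nra.
have [N' HN'] := cv_eventually_between (u_cv i) (conj (ltac:(lra) : L i - 1 < L i) HLi).
pose k := Nat.max N N'.
have HLc := vscale_nonneg (Rlt_le _ _ Hc0) (vlt0_nonneg L_pos).
have Hle : vle (vscale (/ c) L) (u k) by move=> j; have := HN j k ltac:(lia); rewrite /vscale; lra.
have := Imono _ _ (u_nonneg k) HLc Hle i; have := Iscal _ _ HLc Hc i.
have -> : vscale c (vscale (/ c) L) = L.
  by apply: functional_extensionality => j; rewrite /vscale; field; lra.
have := HN' k.+1 ltac:(lia); rewrite u_orbit /vscale.
nra.
Qed.

Lemma orbit_limit_fixpoint : L = I L.
Proof.
apply: functional_extensionality => i; apply: Rle_antisym.
  exact: orbit_limit_le_image.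
exact: orbit_image_le_limit.
Qed.

End OrbitLimit.

End StandardFunction.

Lemma cv_bounds (u : nat -> R) l a b : (forall k, a <= u k <= b) -> Un_cv u l -> a <= l <= b.
Proof.
move=> Hab Hu.
have cv_const c : Un_cv (fun _ => c) c.
  by move=> e He; exists 0%N => k _; rewrite /Rdist Rminus_diag Rabs_R0.
split; [apply: (Rle_cv_lim _ (cv_const a) Hu) | apply: (Rle_cv_lim _ Hu (cv_const b))];
  by move=> k; have := Hab k; lra.
Qed.

Lemma cv_squeeze (u v w : nat -> R) l : (forall k, u k <= v k <= w k) ->
  Un_cv u l -> Un_cv w l -> Un_cv v l.
Proof.
move=> Huvw Hu Hw e He.
have [N1 H1] := Hu e He; have [N2 H2] := Hw e He.
exists (Nat.max N1 N2) => k Hk.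
have := H1 k ltac:(lia); have := H2 k ltac:(lia); have := Huvw k.
by rewrite /Rdist => ? /Rabs_def2 ? /Rabs_def2 ?; apply: Rabs_def1; lra.
Qed.

Lemma vdecreasing_cv {n} (u : nat -> vec n) (a b : vec n) :
  (forall k, vle (u k.+1) (u k)) -> (forall k, inbox a b (u k)) ->
  exists L, inbox a b L /\ forall i, Un_cv (fun k => u k i) (L i).
Proof.
move=> Hdec Hbox.
have Hlb i : has_lb (fun k => u k i).
  by exists (- a i) => x [k ->]; rewrite /opp_seq; have := (Hbox k).1 i; lra.
pose L i := proj1_sig (decreasing_cv _ (fun k => Hdec k i) (Hlb i)).
have HL i : Un_cv (fun k => u k i) (L i) by exact: proj2_sig.
exists L; split=> [|//]; split=> i;
  by have := cv_bounds (fun k => conj ((Hbox k).1 i) ((Hbox k).2 i)) (HL i); case.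
Qed.

Lemma vincreasing_cv {n} (u : nat -> vec n) (a b : vec n) :
  (forall k, vle (u k) (u k.+1)) -> (forall k, inbox a b (u k)) ->
  exists L, inbox a b L /\ forall i, Un_cv (fun k => u k i) (L i).
Proof.
move=> Hinc Hbox.
have Hub i : has_ub (fun k => u k i) by exists (b i) => x [k ->]; exact: (Hbox k).2.
pose L i := proj1_sig (growing_cv _ (fun k => Hinc k i) (Hub i)).
have HL i : Un_cv (fun k => u k i) (L i) by exact: proj2_sig.
exists L; split=> [|//]; split=> i;
  by have := cv_bounds (fun k => conj ((Hbox k).1 i) ((Hbox k).2 i)) (HL i); case.
Qed.

Section BoxIteration.

Variables (n : nat) (pmin pmax : vec n) (I : vec n -> vec n).
Hypotheses (pmin_pos : vlt (vconst 0) pmin) (pmin_le_pmax : vle pmin pmax)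
  (I_std : standard I) (I_box : forall p, inbox pmin pmax p -> inbox pmin pmax (I p)).

Lemma inbox_pos p : inbox pmin pmax p -> vlt (vconst 0) p.
Proof. by move=> [Hp _] i; have := pmin_pos i; have := Hp i; rewrite /vconst; lra. Qed.

Lemma inbox_nonneg p : inbox pmin pmax p -> nonneg_orthant p.
Proof. by move/inbox_pos/vlt0_nonneg. Qed.

Lemma inbox_pmin : inbox pmin pmax pmin.
Proof. by split=> // i; lra. Qed.

Lemma inbox_pmax : inbox pmin pmax pmax.
Proof. by split=> // i; lra. Qed.

Lemma iter_inbox k p : inbox pmin pmax p -> inbox pmin pmax (iter k I p).
Proof. by elim: k => [|k IH] //= Hp; apply: I_box; apply: IH. Qed.

Lemma iter_vle k p q : inbox pmin pmax p -> inbox pmin pmax q -> vle p q ->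
  vle (iter k I p) (iter k I q).
Proof.
case: I_std => _ [Imono _] Hp Hq; elim: k => [|k IH] //= Hpq.
by apply: Imono; [apply/inbox_nonneg/iter_inbox | apply/inbox_nonneg/iter_inbox | apply: IH].
Qed.

Lemma inbox_fixpoint_le_feasible ps q : inbox pmin pmax ps -> ps = I ps ->
  inbox pmin pmax q -> vle (I q) q -> vle ps q.
Proof.
move=> Hps HpsI Hq HIq; apply: (standard_fixpoint_le I_std) HpsI HIq.
  exact: inbox_nonneg.
exact: inbox_pos.
Qed.

Lemma inbox_orbit_fixpoint p0 L : inbox pmin pmax p0 -> inbox pmin pmax L ->
  (forall i, Un_cv (fun k => iter k I p0 i) (L i)) -> L = I L.
Proof.
move=> Hp0 HL Hcv; apply: (orbit_limit_fixpoint I_std _ _ Hcv (inbox_pos HL)) => k //.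
exact/inbox_nonneg/iter_inbox.
Qed.

Lemma inbox_unique_attracting_fixpoint : exists ps,
  inbox pmin pmax ps /\ ps = I ps /\
  (forall q, inbox pmin pmax q -> q = I q -> q = ps) /\
  (forall p0, inbox pmin pmax p0 -> forall i, Un_cv (fun k => iter k I p0 i) (ps i)).
Proof.
have [L [HL Lcv]] : exists L, inbox pmin pmax L /\
    forall i, Un_cv (fun k => iter k I pmax i) (L i).
  apply: vdecreasing_cv => [k|k]; last exact: iter_inbox inbox_pmax.
  by rewrite iterSr; apply: iter_vle; [exact: I_box inbox_pmax | exact: inbox_pmax |
                                       exact: (I_box inbox_pmax).2].
have [l [Hl lcv]] : exists l, inbox pmin pmax l /\
    forall i, Un_cv (fun k => iter k I pmin i) (l i).
  apply: vincreasing_cv => [k|k]; last exact: iter_inbox inbox_pmin.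
  by rewrite iterSr; apply: iter_vle; [exact: inbox_pmin | exact: I_box inbox_pmin |
                                       exact: (I_box inbox_pmin).1].
have LI := inbox_orbit_fixpoint inbox_pmax HL Lcv.
have lI := inbox_orbit_fixpoint inbox_pmin Hl lcv.
have unique q : inbox pmin pmax q -> q = I q -> q = L.
  by move=> Hq HqI; apply: (standard_fixpoint_unique I_std) => //; exact: inbox_pos.
exists L; do 3!split=> //.
move=> p0 [Hp0min Hp0max] i.
apply: (@cv_squeeze (fun k => iter k I pmin i) _ (fun k => iter k I pmax i)).
- by move=> k; split; apply: iter_vle => //; [exact: inbox_pmin | exact: inbox_pmax].
- by rewrite -(unique l Hl lI).
- exact: Lcv.
Qed.

End BoxIteration.

Lemma vln_vexp {n} (x : vec n) : vln (vexp x) = x.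
Proof. by apply: functional_extensionality => i; rewrite /vln /vexp ln_exp. Qed.

Lemma vexp_vln {n} (p : vec n) : vlt (vconst 0) p -> vexp (vln p) = p.
Proof. by move=> Hp; apply: functional_extensionality => i; rewrite /vln /vexp exp_ln //; apply: Hp. Qed.

Lemma vle_vln {n} (p : vec n) x : vlt (vconst 0) p -> vle (vln p) x <-> vle p (vexp x).
Proof.
move=> Hp; have Hpi i : 0 < p i by exact: Hp.
split=> Hle i; apply: Rnot_lt_le => Hlt; move: (Hle i); apply: Rlt_not_le; move: Hlt;
  rewrite /vln /vexp => Hlt.
  by rewrite -(ln_exp (x i)); apply: ln_increasing => //; exact: exp_pos.
by rewrite -(exp_ln (p i)) //; exact: exp_increasing.
Qed.

Lemma fast_lipschitz_log {n m} (X : vec n -> Prop) (obj : vec n -> vec m) (g : vec n -> vec n) :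
  (forall p, X p -> vlt (vconst 0) p) -> (forall p, X p -> X (g p)) ->
  fast_lipschitz X obj g ->
  fast_lipschitz (fun x => X (vexp x)) (fun x => obj (vexp x)) (fun x => vln (g (vexp x))).
Proof.
move=> Xpos Xg [ps [[Xps [gps ps_unique]] [ps_pareto ps_pareto_unique]]].
have Epar x : pareto_optimal (fun y => X (vexp y) /\ vle (vln (g (vexp y))) y)
                (fun y => obj (vexp y)) x <->
              pareto_optimal (fun p => X p /\ vle (g p) p) obj (vexp x).
  apply: pareto_optimal_comp => [y|q [Xq _]]; last by exists (vln q); rewrite vexp_vln //; exact: Xpos.
  by split=> -[Xy Hy]; split=> //; apply/vle_vln => //; apply/Xpos/Xg.
have Eps : vexp (vln ps) = ps by exact: vexp_vln (Xpos _ Xps).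
exists (vln ps); split; [split; [|split] | split].
- by rewrite Eps.
- by rewrite Eps -gps.
- move=> y Xy Hy; rewrite -(vln_vexp y); congr vln; apply: ps_unique => //.
  by rewrite {1}Hy vexp_vln //; apply/Xpos/Xg.
- by apply/Epar; rewrite Eps.
- by move=> y /Epar /ps_pareto_unique <-; rewrite vln_vexp.
Qed.

Theorem mainTheorem3 (n m : nat) (pmin pmax : vec n)
    (I : vec n -> vec n) (kappa : vec n -> vec m)
    (Hpmin : vlt (vconst 0) pmin) (Hpminmax : vle pmin pmax)
    (HIdiff : differentiable_on nonneg_orthant I)
    (HIstd : standard I)
    (HIbox : forall p, inbox pmin pmax p -> inbox pmin pmax (I p))
    (Hkdiff : forall p, exists J, has_gradient kappa p J)
    (Hkgrad : forall p, inbox pmin pmax p -> forall J, has_gradient kappa p J ->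
       (forall i j, 0 <= J i j) /\ (forall i, exists j, J i j <> 0))
    (Hfeas : exists p, inbox pmin pmax p /\ vle (I p) p) :
  fast_lipschitz (fun x => inbox pmin pmax (vexp x))
                 (fun x => kappa (vexp x))
                 (fun x => vln (I (vexp x)))
  /\ exists ps : vec n,
       inbox pmin pmax ps /\ ps = I ps /\
       (forall q, inbox pmin pmax q -> q = I q -> q = ps) /\
       pareto_optimal (fun p => inbox pmin pmax p /\ vle (I p) p) kappa ps /\
       (forall q, pareto_optimal (fun p => inbox pmin pmax p /\ vle (I p) p) kappa q ->
          q = ps) /\
       (forall p0, inbox pmin pmax p0 ->
          forall i, Un_cv (fun k => iter k I p0 i) (ps i)).
Proof.
have [ps [ps_box [ps_fix [ps_unique ps_attracts]]]] :=
  inbox_unique_attracting_fixpoint Hpmin Hpminmax HIstd HIbox.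
have [ps_pareto ps_pareto_unique] :
    pareto_optimal (fun p => inbox pmin pmax p /\ vle (I p) p) kappa ps /\
    forall q, pareto_optimal (fun p => inbox pmin pmax p /\ vle (I p) p) kappa q -> q = ps.
  apply: least_pareto_optimal => [|q [Hq HIq]|p q [Hp _] [Hq _]|p q [Hp _] [Hq _]].
  - by split=> //; rewrite -ps_fix => i; lra.
  - exact: (inbox_fixpoint_le_feasible Hpmin HIstd ps_box ps_fix Hq HIq).
  - exact: (nonneg_gradient_vle (@inbox_segment _ _ _) Hkdiff Hkgrad Hp Hq).
  - exact: (nonneg_gradient_neq (@inbox_segment _ _ _) Hkdiff Hkgrad Hp Hq).
split; last by exists ps.
apply: fast_lipschitz_log => [p|p|]; [exact: (inbox_pos Hpmin) | exact: HIbox | by exists ps].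
Qed.
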